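(* Let $m\ge 3$. Let $X_1,\dots,X_m,Y_1,\dots,Y_m\in\mathbb{C}^n$ and $\alpha_1,\dots,\alpha_m\in\mathbb{Z}_{\ge0}^n$, and for a point $Z=(z_1,\dots,z_n)$ and $\alpha=(\alpha_{1},\dots,\alpha_{n})$ write $Z^{\alpha}=z_1^{\alpha_1}\cdots z_n^{\alpha_n}$. Let $$V_m^{(1)}=\det\big(X_i^{\alpha_j}\big)_{i,j=1}^m,\qquad V_m^{(2)}=\det\big(Y_i^{\alpha_j}\big)_{i,j=1}^m,$$ $$M=\max_{i,j}\{|X_i^{\alpha_j}|,|Y_i^{\alpha_j}|\},$$ $$B=\max_{i,j,k}\Big\{|X_i^{\alpha_j}-X_i^{\alpha_k}|,\ |X_j^{\alpha_i}-X_k^{\alpha_i}|,\ |Y_i^{\alpha_j}-Y_i^{\alpha_k}|,\ |Y_j^{\alpha_i}-Y_k^{\alpha_i}|\Big\},$$ $$\varepsilon=\max_{i,j}|X_i^{\alpha_j}-Y_i^{\alpha_j}|,$$ with all indices ranging over $1,\dots,m$. Then $$|V_m^{(1)}-V_m^{(2)}|\le m\cdot m!\,M^{m-2}B\,\varepsilon.$$ *)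

From HB Require Import structures.
From mathcomp Require Import all_boot all_order all_algebra.
From mathcomp Require Import complex.
From mathcomp Require Import reals.
Set Implicit Arguments. Unset Strict Implicit. Unset Printing Implicit Defensive.
Import Order.TTheory GRing.Theory Num.Theory.
Local Open Scope ring_scope.

Definition monom {C : comRingType} {n : nat} (Z : 'I_n -> C) (a : 'I_n -> nat) : C :=
  \prod_(k < n) Z k ^+ a k.

Definition gvdet {C : comRingType} {m n : nat} (X : 'I_m -> 'I_n -> C)
  (al : 'I_m -> 'I_n -> nat) : C :=
  \det (\matrix_(i < m, j < m) monom (X i) (al j)).

Definition maxM {R : realType} {m n : nat} (X Y : 'I_m -> 'I_n -> R[i])
  (al : 'I_m -> 'I_n -> nat) : R[i] :=
  \big[Num.max/0]_(i < m) \big[Num.max/0]_(j < m)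
     Num.max `|monom (X i) (al j)| `|monom (Y i) (al j)|.

Definition maxB {R : realType} {m n : nat} (X Y : 'I_m -> 'I_n -> R[i])
  (al : 'I_m -> 'I_n -> nat) : R[i] :=
  \big[Num.max/0]_(i < m) \big[Num.max/0]_(j < m) \big[Num.max/0]_(k < m)
    Num.max (Num.max `|monom (X i) (al j) - monom (X i) (al k)|
                     `|monom (X j) (al i) - monom (X k) (al i)|)
            (Num.max `|monom (Y i) (al j) - monom (Y i) (al k)|
                     `|monom (Y j) (al i) - monom (Y k) (al i)|).

Definition maxEps {R : realType} {m n : nat} (X Y : 'I_m -> 'I_n -> R[i])
  (al : 'I_m -> 'I_n -> nat) : R[i] :=
  \big[Num.max/0]_(i < m) \big[Num.max/0]_(j < m)
     `|monom (X i) (al j) - monom (Y i) (al j)|.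

(* Telescoping over the rows gives det A - det B = sum_(k,j) (A_kj - B_kj) c_kj,
   where c_kj is a cofactor of a matrix whose rows are rows of A or of B. Such a
   cofactor is the determinant of an (m-1) x (m-1) matrix with entries bounded
   by M whose entries within a row differ by at most B; subtracting its first
   column from its second leaves a column bounded by B, so |c_kj| is at most
   (m-1)! M^(m-2) B. Summing the m^2 terms, each at most eps (m-1)! M^(m-2) B,
   gives m m! M^(m-2) B eps. *)

From HB Require Import structures.
From mathcomp Require Import all_boot all_order all_algebra.
From mathcomp Require Import complex reals perm ring.
Import Order.TTheory GRing.Theory Num.Theory.
Local Open Scope ring_scope.

Section DeterminantIdentities.
Variable R : comPzRingType.

Lemma det_sub_col n (A : 'M[R]_n) (j0 j1 : 'I_n) : j0 != j1 ->
  \det (\matrix_(i, j) if j == j1 then A i j1 - A i j0 else A i j) = \det A.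
Proof.
move=> j01; rewrite -det_tr -[RHS]det_tr.
pose B := \matrix_(i, j) if i == j1 then A j j0 else A j i.
have detB : \det B = 0.
  by apply: (determinant_alternate j01) => j; rewrite !mxE eqxx (negbTE j01).
rewrite (@determinant_multilinear _ _ _ A^T B j1 1 (-1)).
- by rewrite detB mulr0 addr0 mul1r.
- by apply/rowP => j; rewrite !mxE eqxx mul1r mulN1r.
- by apply/matrixP => i j; rewrite !mxE eq_sym (negbTE (neq_lift _ _)).
- by apply/matrixP => i j; rewrite !mxE eq_sym (negbTE (neq_lift _ _)).
Qed.

Definition mix_rows {n} (k : nat) (A B : 'M[R]_n) : 'M[R]_n :=
  \matrix_(i, j) if (i < k)%N then A i j else B i j.

Lemma det_mix_rowsS n (A B : 'M[R]_n) (k : 'I_n) :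
  \det (mix_rows k.+1 A B) - \det (mix_rows k A B)
    = \sum_j (A k j - B k j) * cofactor (mix_rows k A B) k j.
Proof.
have cofS j : cofactor (mix_rows k.+1 A B) k j = cofactor (mix_rows k A B) k j.
  rewrite /cofactor; congr (_ * \det _); apply/matrixP => a b; rewrite !mxE.
  by rewrite ltnS leq_eqVlt eq_sym (negbTE (neq_bump _ _)).
rewrite !(expand_det_row _ k) -sumrB.
by apply: eq_bigr => j _; rewrite cofS !mxE ltnSn ltnn mulrBl.
Qed.

Lemma det_sub_rowwise n (A B : 'M[R]_n) :
  \det A - \det B
    = \sum_(k < n) \sum_j (A k j - B k j) * cofactor (mix_rows k A B) k j.
Proof.
have mixA : mix_rows n A B = A by apply/matrixP => i j; rewrite mxE ltn_ord.
have mixB : mix_rows 0 A B = B by apply/matrixP => i j; rewrite mxE.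
under eq_bigr => k _ do rewrite -det_mix_rowsS.
rewrite -(big_mkord xpredT (fun k => \det (mix_rows k.+1 A B) - \det (mix_rows k A B))).
by rewrite telescope_sumr // mixA mixB.
Qed.

End DeterminantIdentities.

Section DeterminantBounds.
Variable C : numDomainType.

Lemma normr_cofactor n (A : 'M[C]_n) i j :
  `|cofactor A i j| = `|\det (row' i (col' j A))|.
Proof. by rewrite normrM normrX normrN1 expr1n mul1r. Qed.

Lemma normr_det_le n (A : 'M[C]_n) (M : C) :
  (forall i j, `|A i j| <= M) -> `|\det A| <= n`!%:R * M ^+ n.
Proof.
move=> AM; rewrite [leRHS](_ : _ = \sum_(s : 'S_n) M ^+ n); last first.
  by rewrite sumr_const card_Sn mulr_natl.
apply: le_trans (ler_norm_sum _ _ _) (ler_sum _ _) => s _.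
rewrite normrM normrX normrN1 expr1n mul1r normr_prod -[X in M ^+ X]card_ord.
by rewrite -prodr_const; apply: ler_prod => i _; rewrite normr_ge0 AM.
Qed.

Lemma normr_det_le_col n (A : 'M[C]_n.+1) j0 (M D : C) :
  (forall i j, j != j0 -> `|A i j| <= M) -> (forall i, `|A i j0| <= D) ->
  `|\det A| <= (n.+1)`!%:R * M ^+ n * D.
Proof.
move=> AM AD; rewrite (expand_det_col A j0).
rewrite [leRHS](_ : _ = \sum_(i < n.+1) D * (n`!%:R * M ^+ n)); last first.
  by rewrite sumr_const card_ord factS natrM -mulr_natl; ring.
apply: le_trans (ler_norm_sum _ _ _) (ler_sum _ _) => i _.
rewrite normrM ler_pM // normr_cofactor; apply: normr_det_le => a b.
by rewrite !mxE AM // eq_sym neq_lift.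
Qed.

Lemma normr_det_le_col_spread n (A : 'M[C]_n.+2) (M D : C) :
  (forall i j, `|A i j| <= M) -> (forall i j k, `|A i j - A i k| <= D) ->
  `|\det A| <= (n.+2)`!%:R * M ^+ n.+1 * D.
Proof.
move=> AM AD; rewrite -(@det_sub_col _ _ A 0 1) //.
by apply: (@normr_det_le_col _ _ 1) => [i j /negbTE j1|i]; rewrite !mxE ?j1 ?eqxx.
Qed.

Lemma normr_det_sub_le n (A B : 'M[C]_n.+3) (M D e : C) :
  (forall i j, `|A i j| <= M) -> (forall i j, `|B i j| <= M) ->
  (forall i j k, `|A i j - A i k| <= D) -> (forall i j k, `|B i j - B i k| <= D) ->
  (forall i j, `|A i j - B i j| <= e) ->
  `|\det A - \det B| <= (n.+3 * (n.+3)`!)%:R * M ^+ n.+1 * D * e.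
Proof.
move=> AM BM AD BD ABe; rewrite det_sub_rowwise.
rewrite [leRHS](_ : _ = \sum_(k < n.+3) \sum_(j < n.+3)
                          e * ((n.+2)`!%:R * M ^+ n.+1 * D)); last first.
  by rewrite !sumr_const !card_ord -mulrnA -mulr_natl (factS n.+2) !natrM; ring.
apply: le_trans (ler_norm_sum _ _ _) (ler_sum _ _) => k _.
apply: le_trans (ler_norm_sum _ _ _) (ler_sum _ _) => j _.
rewrite normrM ler_pM // normr_cofactor.
by apply: normr_det_le_col_spread => [a b|a b c]; rewrite !mxE;
  case: ifP => _; rewrite ?AM ?BM ?AD ?BD.
Qed.

(* [Num.max] is only a maximum on comparable, e.g. real, values. *)
Lemma real_bigmax_sup (I : finType) (F : I -> C) i x :
  (forall j, F j \is Num.real) -> x <= F i -> x <= \big[Num.max/0]_j F j.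
Proof.
move=> Freal xFi; elim: (index_enum I) (mem_index_enum i) => // a r IHr.
rewrite in_cons big_cons comparable_le_max; last first.
  by apply: real_comparable => //; apply: bigmax_real.
by case/orP => [/eqP <-|/IHr ->]; rewrite ?xFi ?orbT.
Qed.

End DeterminantBounds.

Section MonomialBounds.
Context {R : realType} {m n : nat}.
Variables (X Y : 'I_m -> 'I_n -> R[i]) (al : 'I_m -> 'I_n -> nat).

Let real_max_normr (a b : R[i]) : Num.max `|a| `|b| \is Num.real.
Proof. exact: max_real (normr_real a) (normr_real b). Qed.

Let le_max_normrl (a b : R[i]) : `|a| <= Num.max `|a| `|b|.
Proof. by rewrite comparable_le_max ?real_comparable ?normr_real ?lexx. Qed.

Let le_max_normrr (a b : R[i]) : `|b| <= Num.max `|a| `|b|.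
Proof. by rewrite comparable_le_max ?real_comparable ?normr_real ?lexx ?orbT. Qed.

Lemma normr_monom_le_maxM i j :
  `|monom (X i) (al j)| <= maxM X Y al /\ `|monom (Y i) (al j)| <= maxM X Y al.
Proof.
suff maxM_ij : Num.max `|monom (X i) (al j)| `|monom (Y i) (al j)| <= maxM X Y al.
  by split; apply: le_trans maxM_ij.
rewrite /maxM; apply: (@real_bigmax_sup R[i] _ _ i) => [k|].
  by apply: bigmax_real => // l _.
exact: real_bigmax_sup.
Qed.

Lemma normr_monom_sub_le_maxEps i j :
  `|monom (X i) (al j) - monom (Y i) (al j)| <= maxEps X Y al.
Proof.
rewrite /maxEps; apply: (@real_bigmax_sup R[i] _ _ i) => [k|].
  by apply: bigmax_real => // l _; apply: normr_real.
by apply: (@real_bigmax_sup R[i] _ _ j) => // l; apply: normr_real.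
Qed.

Lemma normr_monom_sub_le_maxB i j k :
  `|monom (X i) (al j) - monom (X i) (al k)| <= maxB X Y al /\
  `|monom (Y i) (al j) - monom (Y i) (al k)| <= maxB X Y al.
Proof.
have real_max4 (a b c d : R[i]) :
    Num.max (Num.max `|a| `|b|) (Num.max `|c| `|d|) \is Num.real.
  exact: max_real (real_max_normr a b) (real_max_normr c d).
have le_maxB x : x <= Num.max
      (Num.max `|monom (X i) (al j) - monom (X i) (al k)|
               `|monom (X j) (al i) - monom (X k) (al i)|)
      (Num.max `|monom (Y i) (al j) - monom (Y i) (al k)|
               `|monom (Y j) (al i) - monom (Y k) (al i)|) ->
    x <= maxB X Y al.
  move=> x_le; rewrite /maxB; apply: (@real_bigmax_sup R[i] _ _ i) => [l|].
    by do 2!(apply: bigmax_real => // ? _).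
  apply: (@real_bigmax_sup R[i] _ _ j) => [l|]; first by apply: bigmax_real => // ? _.
  exact: (@real_bigmax_sup R[i] _ _ k).
split; apply: le_maxB; rewrite comparable_le_max ?real_comparable ?real_max_normr //.
  by apply/orP; left.
by apply/orP; right.
Qed.

End MonomialBounds.

Theorem theorem4 (R : realType) (m n : nat) (hm : (3 <= m)%N)
  (X Y : 'I_m -> 'I_n -> R[i]) (al : 'I_m -> 'I_n -> nat) :
  `|gvdet X al - gvdet Y al|
    <= (m * m`!)%:R * maxM X Y al ^+ (m - 2) * maxB X Y al * maxEps X Y al.
Proof.
case: m hm X Y al => [|[|[|m]]] // _ X Y al; rewrite !subSS subn0.
apply: normr_det_sub_le => [i j|i j|i j k|i j k|i j]; rewrite !mxE.
- exact: (normr_monom_le_maxM X Y al i j).1.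
- exact: (normr_monom_le_maxM X Y al i j).2.
- exact: (normr_monom_sub_le_maxB X Y al i j k).1.
- exact: (normr_monom_sub_le_maxB X Y al i j k).2.
- exact: normr_monom_sub_le_maxEps.
Qed.
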